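(* There is an absolute constant $c>0$ such that for all $k\ge3$, with $R=F_{\lceil 2k/3\rceil}$, $$\mathcal{Q}_R(\mathcal{F}_k)\le c\,F_k^{-2/3},$$ where $\mathcal{F}_k=\{(j/F_k,\{jF_{k-1}/F_k\})\mid j=1,\ldots,F_k\}$.
   Context: $F_k$ is the $k$-th Fibonacci number: $F_1=F_2=1$, $F_k=F_{k-1}+F_{k-2}$; $\{x\}=x-\lfloor x\rfloor$. For $\boldsymbol{n}=(n_1,n_2)\in\mathbb{Z}^2$ let $|\boldsymbol{n}|=\max\{|n_1|,|n_2|\}$. For a point set $T_M=\{\boldsymbol{x}_1,\ldots,\boldsymbol{x}_M\}\subset\mathbb{R}^2$ and $R>0$, $$\mathcal{Q}_R(T_M)=\frac1R+\sum_{\substack{\boldsymbol{n}\in\mathbb{Z}^2\\0<|\boldsymbol{n}|<R}}\Big(\frac{1}{|\boldsymbol{n}|^{3/2}}+\frac{1}{(1+|n_1|)(1+|n_2|)}\Big)\Big|\frac1M\sum_{j=1}^M e^{2\pi\mathrm{i}\,\boldsymbol{n}\cdot\boldsymbol{x}_j}\Big|.$$ *)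

From Stdlib Require Import Reals Lra Lia ZArith Arith List.
Open Scope R_scope.

(* Fibonacci numbers: fib 0 = 0, fib 1 = fib 2 = 1. *)
Fixpoint fib (n : nat) : nat :=
  match n with
  | O => O
  | S m => match m with O => 1%nat | S p => (fib m + fib p)%nat end
  end.

(* fractional part {x} = x - floor x  (Stdlib frac_part, Int_part = floor) *)
Definition frac (x : R) : R := frac_part x.

Definition Zrange (N : nat) : list Z :=
  map (fun i => (Z.of_nat i - Z.of_nat N)%Z) (seq 0 (2 * N + 1)).

Definition sumR {A : Type} (l : list A) (f : A -> R) : R :=
  fold_right (fun a acc => f a + acc) 0 l.

Definition supnorm (n1 n2 : Z) : Z := Z.max (Z.abs n1) (Z.abs n2).

(* | (1/M) sum_j exp(2 pi i n.x_j) |, with the complex modulus written out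
   as sqrt (Re^2 + Im^2). *)
Definition expsum_abs (T : list (R * R)) (n1 n2 : Z) : R :=
  let ph := fun x : R * R => 2 * PI * (IZR n1 * fst x + IZR n2 * snd x) in
  / INR (length T) *
  sqrt ((sumR T (fun x => cos (ph x))) ^ 2 + (sumR T (fun x => sin (ph x))) ^ 2).

(* Q_R(T_M) for a positive integer R: sum over n in Z^2 with 0 < |n| < R,
   i.e. |n1|,|n2| <= R-1, (n1,n2) <> (0,0). *)
Definition QR (Rr : nat) (T : list (R * R)) : R :=
  / INR Rr +
  sumR (Zrange (Rr - 1)) (fun n1 =>
  sumR (Zrange (Rr - 1)) (fun n2 =>
    if (Z.eqb n1 0 && Z.eqb n2 0)%bool then 0 else
    (/ Rpower (IZR (supnorm n1 n2)) (3 / 2)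
     + / ((1 + IZR (Z.abs n1)) * (1 + IZR (Z.abs n2))))
    * expsum_abs T n1 n2)).

Definition fib_lattice (k : nat) : list (R * R) :=
  map (fun j => (INR j / INR (fib k),
                 frac (INR j * INR (fib (k - 1)) / INR (fib k))))
      (seq 1 (fib k)).

Definition ceil_2k3 (k : nat) : nat := ((2 * k + 2) / 3)%nat.

(* The exponential sum of the Fibonacci lattice F_k vanishes off the dual lattice
   L = {n : n1 + n2 F_{k-1} = 0 mod F_k} and equals 1 on it, so Q_R(F_k) is 1/R plus the two
   weights summed over the nonzero points of L in the box |n| < R.  On L the quadratic form
   d1^2 + (F_k + 2 F_{k-1}) d1 d2 + (F_{k-1}^2 + F_{k-1} F_k - F_k^2) d2^2 takes values in F_k^2 Z,
   and by Cassini's identity its last coefficient is +-1, which keeps it nonzero on small nonzero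
   vectors; hence distinct points a, b of L in the box (where 2R < F_k) satisfy
   F_k <= 5 |a1 - b1| |a2 - b2|.  So every point has second weight at most 5/F_k and there are
   O(R^2/F_k) of them.  On the points where |n2| dominates, the integer part of 5 n2^2 / F_k is
   injective, so the D-th such point has |n|^(3/2) >= (F_k D / 5)^(3/4); summing over D <= K with
   K = O(R^2/F_k) bounds the first weights by O(F_k^(-3/4) K^(1/4)).  Since R = F_{ceil(2k/3)}
   is of order F_k^(2/3), all three contributions are O(F_k^(-2/3)). *)

From Stdlib Require Import Reals ZArith List Lia Psatz.
Open Scope R_scope.

Section ListSums.
Context {A : Type}.
Implicit Types (l m : list A) (f g : A -> R).

Lemma sumR_nil f : sumR nil f = 0.
Proof. reflexivity. Qed.

Lemma sumR_cons a l f : sumR (a :: l) f = f a + sumR l f.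
Proof. reflexivity. Qed.

Lemma sumR_app l m f : sumR (l ++ m) f = sumR l f + sumR m f.
Proof.
  induction l as [|a l IH]; cbn [app]; rewrite ?sumR_nil, ?sumR_cons, ?IH; lra.
Qed.

Lemma sumR_le l f g : (forall x, In x l -> f x <= g x) -> sumR l f <= sumR l g.
Proof.
  induction l as [|a l IH]; intros H; rewrite ?sumR_nil, ?sumR_cons; [lra|].
  apply Rplus_le_compat; [apply H; left | apply IH; intros; apply H; right]; auto.
Qed.

Lemma sumR_ext l f g : (forall x, In x l -> f x = g x) -> sumR l f = sumR l g.
Proof. intros H; apply Rle_antisym; apply sumR_le; intros x Hx; rewrite H; auto; lra. Qed.

Lemma sumR_nonneg l f : (forall x, In x l -> 0 <= f x) -> 0 <= sumR l f.
Proof.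
  induction l as [|a l IH]; intros H; rewrite ?sumR_nil, ?sumR_cons; [lra|].
  apply Rplus_le_le_0_compat; [apply H; left | apply IH; intros; apply H; right]; auto.
Qed.

Lemma sumR_plus l f g : sumR l (fun x => f x + g x) = sumR l f + sumR l g.
Proof. induction l as [|a l IH]; rewrite ?sumR_nil, ?sumR_cons, ?IH; lra. Qed.

Lemma sumR_scal l c f : sumR l (fun x => c * f x) = c * sumR l f.
Proof. induction l as [|a l IH]; rewrite ?sumR_nil, ?sumR_cons, ?IH; lra. Qed.

Lemma sumR_const l c : sumR l (fun _ => c) = INR (length l) * c.
Proof.
  induction l as [|a l IH]; rewrite ?sumR_nil, ?sumR_cons, ?IH; cbn [length];
    rewrite ?S_INR; cbn [INR]; lra.
Qed.

Lemma sumR_filter (p : A -> bool) l f :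
  sumR l (fun x => if p x then f x else 0) = sumR (filter p l) f.
Proof.
  induction l as [|a l IH]; cbn [filter]; rewrite ?sumR_cons, ?IH; [reflexivity|].
  destruct (p a); rewrite ?sumR_cons; lra.
Qed.

Lemma sumR_le_filter_cover (p q : A -> bool) l f :
  (forall x, In x l -> (p x || q x)%bool = true) -> (forall x, In x l -> 0 <= f x) ->
  sumR l f <= sumR (filter p l) f + sumR (filter q l) f.
Proof.
  intros Hpq Hf; rewrite <- !sumR_filter, <- sumR_plus; apply sumR_le.
  intros x Hx; specialize (Hpq x Hx); specialize (Hf x Hx).
  destruct (p x), (q x); cbn in Hpq; lra || discriminate.
Qed.

Lemma sumR_incl_le l m f :
  NoDup l -> incl l m -> (forall x, In x m -> 0 <= f x) -> sumR l f <= sumR m f.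
Proof.
  intros Hl; revert m; induction Hl as [|a l Hal Hl IH]; intros m Hlm Hf.
  { rewrite sumR_nil; apply sumR_nonneg; auto. }
  destruct (in_split a m (Hlm a (or_introl eq_refl))) as (m1 & m2 & ->).
  rewrite sumR_cons, !sumR_app, sumR_cons.
  enough (Hrest : sumR l f <= sumR (m1 ++ m2) f) by (rewrite sumR_app in Hrest; lra).
  apply IH.
  - intros x Hx; destruct (in_app_or _ _ _ (Hlm x (or_intror Hx))) as [H|[H|H]];
      [apply in_or_app; auto | subst; contradiction | apply in_or_app; auto].
  - intros x Hx; apply Hf; apply in_app_or in Hx; apply in_or_app; cbn; tauto.
Qed.

End ListSums.

Lemma sumR_map {A B} (h : A -> B) l f : sumR (map h l) f = sumR l (fun x => f (h x)).
Proof. induction l as [|a l IH]; cbn [map]; rewrite ?sumR_cons, ?IH; reflexivity. Qed.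

Lemma sumR_prod {A B} (l : list A) (m : list B) g :
  sumR l (fun a => sumR m (fun b => g a b)) = sumR (list_prod l m) (fun p => g (fst p) (snd p)).
Proof.
  induction l as [|a l IH]; cbn [list_prod]; [reflexivity|].
  rewrite sumR_cons, sumR_app, sumR_map, IH; reflexivity.
Qed.

Lemma sumR_le_inj {A B} (h : A -> B) (l : list A) (m : list B) (g : B -> R) :
  NoDup l -> (forall x y, In x l -> In y l -> h x = h y -> x = y) ->
  (forall x, In x l -> In (h x) m) -> (forall y, In y m -> 0 <= g y) ->
  sumR l (fun x => g (h x)) <= sumR m g.
Proof.
  intros Hl Hinj Hm Hg; rewrite <- sumR_map; apply sumR_incl_le; auto.
  - apply NoDup_map_NoDup_ForallPairs; auto; intros x y Hx Hy; apply Hinj; auto.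
  - intros y Hy; apply in_map_iff in Hy as (x & <- & Hx); auto.
Qed.

Lemma In_Zrange N z : In z (Zrange N) <-> (Z.abs z <= Z.of_nat N)%Z.
Proof.
  unfold Zrange; rewrite in_map_iff; split.
  - intros (i & <- & Hi); apply in_seq in Hi; lia.
  - intros H; exists (Z.to_nat (z + Z.of_nat N)); split; [lia|]; apply in_seq; lia.
Qed.

Lemma NoDup_Zrange N : NoDup (Zrange N).
Proof.
  apply NoDup_map_NoDup_ForallPairs; [|apply seq_NoDup].
  intros a b _ _ E; lia.
Qed.

Lemma length_Zrange N : length (Zrange N) = (2 * N + 1)%nat.
Proof. unfold Zrange; rewrite length_map, length_seq; reflexivity. Qed.

Lemma NoDup_list_prod {A B} (l : list A) (m : list B) :
  NoDup l -> NoDup m -> NoDup (list_prod l m).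
Proof.
  induction 1 as [|a l Hal Hl IH]; intros Hm; cbn; [constructor|].
  apply NoDup_app; auto.
  - apply NoDup_map_NoDup_ForallPairs; auto; intros u v _ _ E; inversion E; auto.
  - intros [x y] H1 H2; apply in_map_iff in H1 as (y' & E & _); inversion E; subst.
    apply in_prod_iff in H2; tauto.
Qed.

Lemma Zpair_eq_dec (a b : Z * Z) : {a = b} + {a <> b}.
Proof. decide equality; apply Z.eq_dec. Qed.

Lemma Z_div_bounds x P : (0 < P)%Z -> (P * (x / P) <= x < P * (x / P) + P)%Z.
Proof.
  intros HP; pose proof (Z.div_mod x P ltac:(lia)); pose proof (Z.mod_pos_bound x P HP); lia.
Qed.

Lemma Z_div_eq_close x y P : (0 < P)%Z -> (x / P = y / P)%Z -> (Z.abs (x - y) < P)%Z.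
Proof.
  intros HP E; pose proof (Z_div_bounds x P HP); pose proof (Z_div_bounds y P HP).
  rewrite E in *; lia.
Qed.

Lemma Z_div_abs_le x B P : (0 < P)%Z -> (Z.abs x <= B)%Z -> (Z.abs (x / P) <= B / P + 1)%Z.
Proof.
  intros HP Hx; pose proof (Z_div_bounds x P HP); pose proof (Z_div_bounds B P HP).
  assert (x / P < B / P + 1)%Z by nia.
  assert (- (B / P) - 2 < x / P)%Z by nia.
  lia.
Qed.

Lemma IZR_div_le x P : (0 < P)%Z -> IZR (x / P) <= IZR x / IZR P.
Proof.
  intros HP; pose proof (Z.mul_div_le x P HP) as H; apply IZR_le in H; rewrite mult_IZR in H.
  assert (0 < IZR P) by (apply IZR_lt; assumption).
  apply (Rmult_le_reg_l (IZR P)); [assumption|].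
  replace (IZR P * (IZR x / IZR P)) with (IZR x) by (field; lra); assumption.
Qed.

Lemma Rpower_pos x y : 0 < Rpower x y.
Proof. apply exp_pos. Qed.

Lemma Rpower_1_l y : Rpower 1 y = 1.
Proof. unfold Rpower; rewrite ln_1, Rmult_0_r; apply exp_0. Qed.

Lemma Rpower_pow_l x n y : 0 < x -> Rpower (x ^ n) y = Rpower x (INR n * y).
Proof. intros Hx; rewrite <- Rpower_pow, Rpower_mult by assumption; reflexivity. Qed.

Lemma Rpower_pow_r y a n : Rpower y a ^ n = Rpower y (a * INR n).
Proof. rewrite <- Rpower_pow, Rpower_mult by apply Rpower_pos; reflexivity. Qed.

Lemma Rpower_pow_r_inv y a n : 0 < y -> a * INR n = 1 -> Rpower y a ^ n = y.
Proof. intros Hy Ha; rewrite Rpower_pow_r, Ha; apply Rpower_1, Hy. Qed.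

Lemma pow_le_reg x y n : (0 < n)%nat -> 0 <= x -> 0 <= y -> x ^ n <= y ^ n -> x <= y.
Proof.
  intros Hn Hx Hy Hxy; destruct (Rle_lt_dec x y) as [|Hlt]; [assumption|exfalso].
  assert (Hpow : forall m, y ^ S m < x ^ S m).
  { induction m as [|m IH]; [cbn; lra|].
    change (y * y ^ S m < x * x ^ S m); pose proof (pow_le y (S m) Hy); nra. }
  destruct n as [|n]; [lia|]; specialize (Hpow n); lra.
Qed.

(** * Fibonacci numbers *)

Section Fibonacci.
Local Open Scope nat_scope.

Lemma fib_SS n : fib (S (S n)) = fib (S n) + fib n.
Proof. reflexivity. Qed.

Lemma fib_le_S n : fib n <= fib (S n).
Proof. destruct n as [|[|n]]; cbn; lia. Qed.

Lemma fib_mono a b : a <= b -> fib a <= fib b.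
Proof. induction 1; [lia|]; pose proof (fib_le_S m); lia. Qed.

Lemma fib_pos n : 1 <= n -> 1 <= fib n.
Proof. intros H; apply (fib_mono 1) in H; cbn in H; lia. Qed.

Lemma fib_SS_le n : fib (S (S n)) <= 2 * fib (S n).
Proof. rewrite fib_SS; pose proof (fib_le_S n); lia. Qed.

Lemma fib_add a b : fib (S (a + b)) = fib (S a) * fib (S b) + fib a * fib b.
Proof.
  induction a as [a IH] using lt_wf_ind; destruct a as [|[|a]].
  - cbn; lia.
  - cbn [Nat.add]; rewrite fib_SS; cbn [fib]; lia.
  - replace (S (S (S a) + b)) with (S (S (S (a + b)))) by lia.
    rewrite fib_SS.
    replace (S (S (a + b))) with (S (S a + b)) by lia.
    rewrite (IH (S a)), (IH a) by lia.
    rewrite !fib_SS; lia.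
Qed.

Lemma fib_mul_le a b : fib a * fib b <= fib (a + b).
Proof.
  destruct a as [|a]; [cbn; lia|].
  rewrite Nat.add_succ_l, fib_add.
  pose proof (fib_le_S b); nia.
Qed.

Lemma fib_add_le a b : 1 <= a -> 1 <= b -> fib (a + b) <= 3 * fib a * fib b.
Proof.
  intros Ha Hb; destruct a as [|a]; [lia|]; destruct b as [|b]; [lia|].
  rewrite Nat.add_succ_l, fib_add.
  pose proof (fib_SS_le b); pose proof (fib_le_S a); nia.
Qed.

Lemma fib_cassini k : 1 <= k ->
  (Z.abs (Z.of_nat (fib (k - 1)) ^ 2 + Z.of_nat (fib (k - 1)) * Z.of_nat (fib k)
          - Z.of_nat (fib k) ^ 2) = 1)%Z.
Proof.
  intros Hk; induction k as [|k IH]; [lia|].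
  destruct k as [|k]; [reflexivity|].
  specialize (IH ltac:(lia)); replace (S (S k) - 1) with (S k) by lia;
    replace (S k - 1) with k in IH by lia.
  rewrite fib_SS, Nat2Z.inj_add.
  destruct k as [|k]; [reflexivity|]; rewrite fib_SS, Nat2Z.inj_add in IH |- *.
  lia.
Qed.

Lemma ceil_2k3_spec k : 2 * k <= 3 * ceil_2k3 k <= 2 * k + 2.
Proof.
  unfold ceil_2k3; pose proof (Nat.div_mod (2 * k + 2) 3 ltac:(lia));
    pose proof (Nat.mod_upper_bound (2 * k + 2) 3 ltac:(lia)); lia.
Qed.

(* [F_m^3 <= F_(3m) <= F_(2k+2) <= 3 F_(2k) <= 9 F_k^2] *)
Lemma fib_cube_le m k : 3 * m <= 2 * k + 2 -> fib m ^ 3 <= 9 * fib k ^ 2.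
Proof.
  intros Hmk; destruct k as [|k]; [replace m with 0 by lia; reflexivity|].
  pose proof (fib_mul_le m m); pose proof (fib_mul_le (m + m) m).
  assert (fib (m + m + m) <= fib (S (S (S k + S k)))) by (apply fib_mono; lia).
  assert (fib (S (S (S k + S k))) <= 3 * fib (S k + S k)).
  { rewrite Nat.add_succ_l, !fib_SS; pose proof (fib_le_S (k + S k)); lia. }
  pose proof (fib_add_le (S k) (S k) ltac:(lia) ltac:(lia)).
  assert (fib m * fib m * fib m <= fib (m + m) * fib m) by (apply Nat.mul_le_mono_r; lia).
  rewrite !Nat.pow_succ_r', !Nat.pow_0_r; nia.
Qed.

(* [F_k^2 <= F_(2k) <= F_(3m) <= 3 F_(2m) F_m <= 9 F_m^3] *)
Lemma fib_sq_le m k : 2 * k <= 3 * m -> 1 <= m -> fib k ^ 2 <= 9 * fib m ^ 3.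
Proof.
  intros Hkm Hm.
  pose proof (fib_mul_le k k).
  assert (fib (k + k) <= fib (m + m + m)) by (apply fib_mono; lia).
  pose proof (fib_add_le (m + m) m ltac:(lia) Hm); pose proof (fib_add_le m m Hm Hm).
  assert (3 * fib (m + m) * fib m <= 3 * (3 * fib m * fib m) * fib m) by
    (apply Nat.mul_le_mono_r; lia).
  rewrite !Nat.pow_succ_r', !Nat.pow_0_r; nia.
Qed.

Lemma fib_ceil_2k3_lt k : 3 <= k -> 2 * (fib (ceil_2k3 k) - 1) < fib k.
Proof.
  intros Hk; pose proof (ceil_2k3_spec k).
  destruct (Nat.le_gt_cases 8 k) as [Hk8|Hk8].
  - assert (fib (ceil_2k3 k) <= fib (k - 2)) by (apply fib_mono; lia).
    assert (fib k = fib (S (k - 2)) + fib (k - 2)) by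
      (rewrite <- fib_SS; f_equal; lia).
    pose proof (fib_le_S (k - 2)); pose proof (fib_pos k); lia.
  - assert (k = 3 \/ k = 4 \/ k = 5 \/ k = 6 \/ k = 7) as Hsmall by lia.
    repeat destruct Hsmall as [-> | Hsmall]; subst; cbn; lia.
Qed.

End Fibonacci.

(** * Exponential sums of rank-1 lattices *)

Lemma cos_add_2PI_mult x z : cos (x + 2 * IZR z * PI) = cos x.
Proof.
  destruct (Z_le_gt_dec 0 z).
  - rewrite <- (Z2Nat.id z), <- INR_IZR_INZ by lia; apply cos_period.
  - rewrite <- (cos_period _ (Z.to_nat (- z))), INR_IZR_INZ, Z2Nat.id by lia.
    f_equal; rewrite opp_IZR; ring.
Qed.

Lemma sin_add_2PI_mult x z : sin (x + 2 * IZR z * PI) = sin x.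
Proof.
  destruct (Z_le_gt_dec 0 z).
  - rewrite <- (Z2Nat.id z), <- INR_IZR_INZ by lia; apply sin_period.
  - rewrite <- (sin_period _ (Z.to_nat (- z))), INR_IZR_INZ, Z2Nat.id by lia.
    f_equal; rewrite opp_IZR; ring.
Qed.

Lemma sum_cos_telescope th n :
  2 * sin (th / 2) * sumR (seq 1 n) (fun j => cos (INR j * th))
  = sin ((INR n + / 2) * th) - sin (th / 2).
Proof.
  induction n as [|n IH].
  { cbn [seq INR]; rewrite sumR_nil; replace ((0 + / 2) * th) with (th / 2) by field; ring. }
  rewrite seq_S, sumR_app, sumR_cons, sumR_nil, Rmult_plus_distr_l, IH.
  replace (1 + n)%nat with (S n) by lia; rewrite S_INR.
  replace ((INR n + 1 + / 2) * th) with ((INR n + 1) * th + th / 2) by field.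
  replace ((INR n + / 2) * th) with ((INR n + 1) * th - th / 2) by field.
  rewrite sin_plus, sin_minus; ring.
Qed.

Lemma sum_sin_telescope th n :
  2 * sin (th / 2) * sumR (seq 1 n) (fun j => sin (INR j * th))
  = cos (th / 2) - cos ((INR n + / 2) * th).
Proof.
  induction n as [|n IH].
  { cbn [seq INR]; rewrite sumR_nil; replace ((0 + / 2) * th) with (th / 2) by field; ring. }
  rewrite seq_S, sumR_app, sumR_cons, sumR_nil, Rmult_plus_distr_l, IH.
  replace (1 + n)%nat with (S n) by lia; rewrite S_INR.
  replace ((INR n + 1 + / 2) * th) with ((INR n + 1) * th + th / 2) by field.
  replace ((INR n + / 2) * th) with ((INR n + 1) * th - th / 2) by field.
  rewrite cos_plus, cos_minus; ring.
Qed.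

Section RootsOfUnity.
Variables (P : nat) (m : Z).
Hypothesis HP : (0 < P)%nat.
Let th := 2 * PI * IZR m / INR P.

Lemma sum_roots_of_unity_divides : (Z.of_nat P | m)%Z ->
  sumR (seq 1 P) (fun j => cos (INR j * th)) = INR P /\
  sumR (seq 1 P) (fun j => sin (INR j * th)) = 0.
Proof.
  intros [s ->].
  assert (Hj : forall j, INR j * th = 0 + 2 * IZR (Z.of_nat j * s) * PI).
  { intros j; unfold th; rewrite !mult_IZR, <- !INR_IZR_INZ; field; apply not_0_INR; lia. }
  split.
  - rewrite (sumR_ext _ _ (fun _ => 1)), sumR_const, length_seq; [ring|].
    intros j _; rewrite Hj, cos_add_2PI_mult; apply cos_0.
  - rewrite (sumR_ext _ _ (fun _ => 0)), sumR_const; [ring|].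
    intros j _; rewrite Hj, sin_add_2PI_mult; apply sin_0.
Qed.

(* Here [sin (th / 2) <> 0], and the telescoped sums close up over a full period. *)
Lemma sum_roots_of_unity_vanishes : ~ (Z.of_nat P | m)%Z ->
  sumR (seq 1 P) (fun j => cos (INR j * th)) = 0 /\
  sumR (seq 1 P) (fun j => sin (INR j * th)) = 0.
Proof.
  intros Hm.
  assert (HPr : 0 < INR P) by (apply lt_0_INR; lia).
  assert (Hsin : sin (th / 2) <> 0).
  { intros H0; apply sin_eq_0_0 in H0 as [z Hz]; apply Hm; exists z.
    apply eq_IZR; rewrite mult_IZR, <- INR_IZR_INZ.
    unfold th in Hz; pose proof PI_RGT_0.
    apply (Rmult_eq_reg_l (PI / INR P)); [|apply Rgt_not_eq, Rdiv_lt_0_compat; lra].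
    replace (PI / INR P * IZR m) with (2 * PI * IZR m / INR P / 2) by (field; lra).
    rewrite Hz; field; lra. }
  assert (Hend : (INR P + / 2) * th = th / 2 + 2 * IZR m * PI) by (unfold th; field; lra).
  pose proof (sum_cos_telescope th P) as Hc; pose proof (sum_sin_telescope th P) as Hs.
  rewrite Hend, sin_add_2PI_mult in Hc; rewrite Hend, cos_add_2PI_mult in Hs.
  split; apply (Rmult_eq_reg_l (2 * sin (th / 2))); lra.
Qed.

End RootsOfUnity.

Definition rank1_lattice (P Q : nat) : list (R * R) :=
  map (fun j => (INR j / INR P, frac (INR j * INR Q / INR P))) (seq 1 P).

Definition in_dual (P Q : Z) (n : Z * Z) : bool := ((fst n + snd n * Q) mod P =? 0)%Z.

Lemma rank1_phase P Q n1 n2 j : (0 < P)%nat -> exists z,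
  2 * PI * (IZR n1 * (INR j / INR P) + IZR n2 * frac (INR j * INR Q / INR P))
  = INR j * (2 * PI * IZR (n1 + n2 * Z.of_nat Q) / INR P) + 2 * IZR z * PI.
Proof.
  intros HP; exists (- (n2 * Int_part (INR j * INR Q / INR P)))%Z.
  unfold frac, frac_part; rewrite opp_IZR, !mult_IZR, plus_IZR, mult_IZR, <- INR_IZR_INZ.
  field; apply not_0_INR; lia.
Qed.

Lemma expsum_rank1_lattice P Q n1 n2 : (0 < P)%nat ->
  expsum_abs (rank1_lattice P Q) n1 n2
  = if in_dual (Z.of_nat P) (Z.of_nat Q) (n1, n2) then 1 else 0.
Proof.
  intros HP; set (th := 2 * PI * IZR (n1 + n2 * Z.of_nat Q) / INR P).
  assert (Hc : sumR (rank1_lattice P Q)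
                 (fun x => cos (2 * PI * (IZR n1 * fst x + IZR n2 * snd x)))
               = sumR (seq 1 P) (fun j => cos (INR j * th))).
  { unfold rank1_lattice; rewrite sumR_map; apply sumR_ext; intros j _; cbn [fst snd].
    destruct (rank1_phase P Q n1 n2 j HP) as [z ->]; apply cos_add_2PI_mult. }
  assert (Hs : sumR (rank1_lattice P Q)
                 (fun x => sin (2 * PI * (IZR n1 * fst x + IZR n2 * snd x)))
               = sumR (seq 1 P) (fun j => sin (INR j * th))).
  { unfold rank1_lattice; rewrite sumR_map; apply sumR_ext; intros j _; cbn [fst snd].
    destruct (rank1_phase P Q n1 n2 j HP) as [z ->]; apply sin_add_2PI_mult. }
  assert (HPr : 0 < INR P) by (apply lt_0_INR; lia).
  unfold expsum_abs; cbv zeta; rewrite Hc, Hs; unfold th.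
  unfold rank1_lattice; rewrite length_map, length_seq.
  unfold in_dual; cbn [fst snd].
  destruct (Z.eqb_spec ((n1 + n2 * Z.of_nat Q) mod Z.of_nat P) 0) as [E|E].
  - apply Z.mod_divide in E; [|lia].
    destruct (sum_roots_of_unity_divides P _ HP E) as [-> ->].
    replace (INR P ^ 2 + 0 ^ 2) with (INR P ^ 2) by ring.
    rewrite sqrt_pow2 by lra; field; lra.
  - assert (E' : ~ (Z.of_nat P | n1 + n2 * Z.of_nat Q)%Z) by
      (intros D; apply E, Z.mod_divide; auto; lia).
    destruct (sum_roots_of_unity_vanishes P _ HP E') as [-> ->].
    replace (0 ^ 2 + 0 ^ 2) with 0 by ring; rewrite sqrt_0; ring.
Qed.

(** * Separation of the dual lattice *)

Section DualSeparation.
Local Open Scope Z_scope.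

Lemma norm_form_cross_gt (P Q d1 d2 : Z) : 0 < Q -> 0 < Z.abs d1 < P -> 0 < Z.abs d2 < P ->
  d2 ^ 2 < Z.abs (d1 * (d1 + (P + 2 * Q) * d2)).
Proof.
  intros HQ H1 H2.
  assert (Hlow : (P + 2 * Q) * Z.abs d2 - Z.abs d1 <= Z.abs (d1 + (P + 2 * Q) * d2)).
  { pose proof (Z.abs_triangle (d1 + (P + 2 * Q) * d2) (- d1)) as Htri.
    replace (d1 + (P + 2 * Q) * d2 + - d1) with ((P + 2 * Q) * d2) in Htri by ring.
    rewrite Z.abs_opp, Z.abs_mul, (Z.abs_eq (P + 2 * Q)) in Htri by lia; lia. }
  assert (Hconc : P - 1 <= Z.abs d2 * (P - Z.abs d2)) by nia.
  rewrite Z.pow_2_r, <- Z.abs_square, Z.abs_mul; nia.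
Qed.

Lemma norm_form_abs_le (P Q e d1 d2 : Z) : Z.abs e = 1 -> 0 <= Q <= P ->
  0 < Z.abs d1 < P -> 0 < Z.abs d2 < P ->
  Z.abs (d1 * (d1 + (P + 2 * Q) * d2) + e * d2 ^ 2) <= P * (5 * Z.abs d1 * Z.abs d2).
Proof.
  intros He HQ H1 H2.
  pose proof (Z.abs_triangle (d1 * (d1 + (P + 2 * Q) * d2)) (e * d2 ^ 2)) as Htri1.
  rewrite Z.mul_add_distr_l in Htri1 |- *.
  pose proof (Z.abs_triangle (d1 * d1) (d1 * ((P + 2 * Q) * d2))) as Htri2.
  rewrite Z.pow_2_r, !Z.abs_mul, (Z.abs_eq (P + 2 * Q)), He in * by lia.
  set (a1 := Z.abs d1) in *; set (a2 := Z.abs d2) in *; clearbody a1 a2.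
  assert (a1 <= P * a2) by nia.
  assert (a2 <= P * a1) by nia.
  assert (a1 * a1 <= a1 * (P * a2)) by (apply Z.mul_le_mono_nonneg_l; lia).
  assert (a2 * a2 <= a2 * (P * a1)) by (apply Z.mul_le_mono_nonneg_l; lia).
  assert (0 <= P * a1 * a2) by nia.
  nia.
Qed.

(* On the dual lattice [d1 = t P - d2 Q] the form [G] below equals [P^2 (t^2 + t d2 - d2^2)];
   it does not vanish on small nonzero vectors, so [P^2 <= |G| <= 5 P |d1 d2|]. *)
Lemma dual_lattice_separation (P Q t d1 d2 : Z) :
  Z.abs (Q ^ 2 + Q * P - P ^ 2) = 1 -> 0 < Q <= P ->
  d1 = t * P - d2 * Q -> (d1, d2) <> (0, 0) -> Z.abs d1 < P -> Z.abs d2 < P ->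
  P <= 5 * Z.abs d1 * Z.abs d2.
Proof.
  intros He HQ Hd Hne H1 H2.
  set (e := Q ^ 2 + Q * P - P ^ 2) in He.
  set (G := d1 * (d1 + (P + 2 * Q) * d2) + e * d2 ^ 2).
  assert (HG : G = P ^ 2 * (t ^ 2 + t * d2 - d2 ^ 2)) by (unfold G, e; subst d1; ring).
  assert (Hd2 : d2 <> 0).
  { intros ->; assert (d1 <> 0) by congruence.
    rewrite Z.mul_0_l, Z.sub_0_r in Hd; subst d1; rewrite Z.abs_mul in H1; nia. }
  assert (He2 : Z.abs (e * d2 ^ 2) = d2 ^ 2) by (rewrite Z.abs_mul, He; nia).
  assert (HG0 : G <> 0).
  { destruct (Z.eq_dec d1 0) as [->|Hd1].
    - unfold G; rewrite Z.mul_0_l, Z.add_0_l; intros E; rewrite E in He2; nia.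
    - pose proof (norm_form_cross_gt P Q d1 d2 ltac:(lia) ltac:(lia) ltac:(lia)) as Hgt.
      unfold G; intros E.
      replace (d1 * (d1 + (P + 2 * Q) * d2)) with (- (e * d2 ^ 2)) in Hgt by lia.
      rewrite Z.abs_opp in Hgt; lia. }
  assert (HGP : P ^ 2 <= Z.abs G).
  { rewrite HG, Z.abs_mul, (Z.abs_eq (P ^ 2)) by nia.
    assert (t ^ 2 + t * d2 - d2 ^ 2 <> 0) by (intros E; rewrite HG, E in HG0; lia).
    rewrite <- (Z.mul_1_r (P ^ 2)) at 1; apply Z.mul_le_mono_nonneg_l; lia. }
  assert (Hd1 : d1 <> 0).
  { intros ->; unfold G in HGP; rewrite Z.mul_0_l, Z.add_0_l, He2 in HGP; nia. }
  pose proof (norm_form_abs_le P Q e d1 d2 He ltac:(lia) ltac:(lia) ltac:(lia)) as HGu.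
  fold G in HGu.
  assert (HPP : P * P <= P * (5 * Z.abs d1 * Z.abs d2)) by lia.
  apply Z.mul_le_mono_pos_l in HPP; lia.
Qed.

End DualSeparation.

Lemma in_dual_spec P Q n : (0 < P)%Z -> in_dual P Q n = true ->
  exists t, fst n = (t * P - snd n * Q)%Z.
Proof.
  unfold in_dual; intros HP Hn; apply Z.eqb_eq in Hn.
  exists ((fst n + snd n * Q) / P)%Z; pose proof (Z.div_mod (fst n + snd n * Q) P ltac:(lia)); lia.
Qed.

(** * Weighted sums over hyperbolically separated sets *)

Definition hyperbolic_separated (P c : Z) (S : list (Z * Z)) : Prop :=
  forall a b, In a S -> In b S -> a <> b ->
  (P <= c * Z.abs (fst a - fst b) * Z.abs (snd a - snd b))%Z.

Definition weight1 (n : Z * Z) : R := / Rpower (IZR (supnorm (fst n) (snd n))) (3 / 2).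

Definition weight2 (n : Z * Z) : R := / ((1 + IZR (Z.abs (fst n))) * (1 + IZR (Z.abs (snd n)))).

Definition pair_swap (n : Z * Z) : Z * Z := (snd n, fst n).

Definition key_range (K : nat) : list Z :=
  map Z.of_nat (seq 1 K) ++ map (fun i => (- Z.of_nat i)%Z) (seq 1 K).

Section HyperbolicSeparated.
Variables (P c N : Z) (S : list (Z * Z)).
Hypotheses (HP : (0 < P)%Z) (Hc : (0 < c)%Z) (HS : NoDup S) (HS0 : ~ In (0, 0)%Z S)
  (Hsep : hyperbolic_separated P c ((0, 0)%Z :: S))
  (Hbox : forall a, In a S -> (Z.abs (fst a) <= N /\ Z.abs (snd a) <= N)%Z).

Lemma separated_from_origin a : In a S -> (P <= c * Z.abs (fst a) * Z.abs (snd a))%Z.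
Proof.
  intros Ha; specialize (Hsep a (0, 0)%Z (or_intror Ha) (or_introl eq_refl)).
  rewrite !Z.sub_0_r in Hsep; apply Hsep; intros ->; contradiction.
Qed.

Lemma separated_pair a b : In a S -> In b S -> a <> b ->
  (P <= c * Z.abs (fst a - fst b) * Z.abs (snd a - snd b))%Z.
Proof. intros Ha Hb; apply Hsep; right; assumption. Qed.

(* Points of S in a horizontal strip of height P / (2 c N) coincide. *)
Definition strip_key (a : Z * Z) : Z := (2 * c * N * snd a / P)%Z.

Lemma strip_key_inj a b : In a S -> In b S -> strip_key a = strip_key b -> a = b.
Proof.
  intros Ha Hb Hk; destruct (Zpair_eq_dec a b) as [|Hne]; [assumption|exfalso].
  pose proof (separated_pair a b Ha Hb Hne) as Hs.
  destruct (Hbox a Ha), (Hbox b Hb).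
  apply Z_div_eq_close in Hk; [|assumption].
  replace (2 * c * N * snd a - 2 * c * N * snd b)%Z with (2 * c * N * (snd a - snd b))%Z in Hk
    by ring.
  rewrite Z.abs_mul, (Z.abs_eq (2 * c * N)) in Hk by nia.
  assert (Z.abs (fst a - fst b) <= 2 * N)%Z by lia.
  assert (c * Z.abs (fst a - fst b) * Z.abs (snd a - snd b)
          <= c * (2 * N) * Z.abs (snd a - snd b))%Z
    by (apply Z.mul_le_mono_nonneg_r; [lia|]; apply Z.mul_le_mono_nonneg_l; lia).
  lia.
Qed.

Lemma length_separated_le : (Z.of_nat (length S) <= 2 * (2 * c * N * N / P) + 3)%Z.
Proof.
  assert (HK : incl (map strip_key S) (Zrange (Z.to_nat (2 * c * N * N / P + 1)))).
  { intros k Hk; apply in_map_iff in Hk as (a & <- & Ha); apply In_Zrange.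
    destruct (Hbox a Ha) as [Ha1 Ha2].
    assert (Hx : (Z.abs (2 * c * N * snd a) <= 2 * c * N * N)%Z).
    { rewrite Z.abs_mul, (Z.abs_eq (2 * c * N)) by nia; apply Z.mul_le_mono_nonneg_l; nia. }
    pose proof (Z_div_abs_le _ _ P HP Hx); pose proof (Z.div_pos (2 * c * N * N) P ltac:(nia) HP).
    unfold strip_key; lia. }
  assert (HND : NoDup (map strip_key S)).
  { apply NoDup_map_NoDup_ForallPairs; [|assumption].
    intros a b Ha Hb; apply strip_key_inj; assumption. }
  pose proof (NoDup_incl_length HND HK) as Hlen.
  rewrite length_map, length_Zrange in Hlen.
  assert (0 <= 2 * c * N * N / P)%Z by (apply Z.div_pos; nia).
  lia.
Qed.

Lemma weight2_le a : In a S -> weight2 a <= IZR c / IZR P.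
Proof.
  intros Ha; pose proof (separated_from_origin a Ha) as Hs.
  apply IZR_le in Hs; rewrite !mult_IZR in Hs.
  set (x := IZR (Z.abs (fst a))) in *; set (y := IZR (Z.abs (snd a))) in *.
  assert (0 <= x) by (apply IZR_le; lia); assert (0 <= y) by (apply IZR_le; lia).
  assert (0 < IZR P) by (apply IZR_lt; lia); assert (0 < IZR c) by (apply IZR_lt; lia).
  assert (Hxy : IZR P / IZR c <= (1 + x) * (1 + y)).
  { apply (Rmult_le_reg_r (IZR c)); [lra|].
    replace (IZR P / IZR c * IZR c) with (IZR P) by (field; lra); nra. }
  apply Rle_trans with (/ (IZR P / IZR c)).
  - apply Rinv_le_contravar; [apply Rdiv_lt_0_compat|]; assumption.
  - right; field; lra.
Qed.

(* On points with [|a1| <= |a2|], the integer part of [c a2^2 / P], signed like [a2], is injective: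
   [|a1 - b1| <= |a2 + b2|] turns separation into [P <= c |a2^2 - b2^2|]. *)
Definition dominant_key (a : Z * Z) : Z :=
  if (0 <? snd a)%Z then (c * snd a ^ 2 / P)%Z else (- (c * snd a ^ 2 / P))%Z.

Lemma dominant_key_pos a : In a S -> (Z.abs (fst a) <= Z.abs (snd a))%Z ->
  (1 <= c * snd a ^ 2 / P)%Z.
Proof.
  intros Ha Hd; pose proof (separated_from_origin a Ha) as Hs.
  assert (HPa : (P <= c * snd a ^ 2)%Z).
  { rewrite Z.pow_2_r, <- Z.abs_square, Z.mul_assoc.
    apply (Z.le_trans _ _ _ Hs), Z.mul_le_mono_nonneg_r; nia. }
  apply (Z.div_le_mono _ _ P) in HPa; [|assumption]; rewrite Z.div_same in HPa by lia; assumption.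
Qed.

Lemma dominant_key_inj a b : In a S -> In b S -> (Z.abs (fst a) <= Z.abs (snd a))%Z ->
  (Z.abs (fst b) <= Z.abs (snd b))%Z -> dominant_key a = dominant_key b -> a = b.
Proof.
  intros Ha Hb Hda Hdb Hk; destruct (Zpair_eq_dec a b) as [|Hne]; [assumption|exfalso].
  pose proof (separated_pair a b Ha Hb Hne) as Hs.
  pose proof (dominant_key_pos a Ha Hda); pose proof (dominant_key_pos b Hb Hdb).
  assert (Hsame : (c * snd a ^ 2 / P = c * snd b ^ 2 / P)%Z /\ (0 <= snd a * snd b)%Z).
  { unfold dominant_key in Hk.
    destruct (Z.ltb_spec 0 (snd a)), (Z.ltb_spec 0 (snd b)); split; lia. }
  destruct Hsame as [Heq Hsgn]; apply Z_div_eq_close in Heq; [|assumption].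
  assert (Hsum : (Z.abs (fst a - fst b) <= Z.abs (snd a + snd b))%Z) by nia.
  replace (c * snd a ^ 2 - c * snd b ^ 2)%Z with (c * ((snd a + snd b) * (snd a - snd b)))%Z in Heq
    by ring.
  rewrite !Z.abs_mul, (Z.abs_eq c) in Heq by lia.
  assert (c * Z.abs (fst a - fst b) * Z.abs (snd a - snd b)
          <= c * (Z.abs (snd a + snd b) * Z.abs (snd a - snd b)))%Z
    by (rewrite <- Z.mul_assoc; apply Z.mul_le_mono_nonneg_l; [lia|];
        apply Z.mul_le_mono_nonneg_r; lia).
  lia.
Qed.

Lemma dominant_key_in_range a : In a S -> (Z.abs (fst a) <= Z.abs (snd a))%Z ->
  In (dominant_key a) (key_range (Z.to_nat (c * N * N / P))).
Proof.
  intros Ha Hd; pose proof (dominant_key_pos a Ha Hd); destruct (Hbox a Ha).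
  assert (c * snd a ^ 2 / P <= c * N * N / P)%Z.
  { apply Z.div_le_mono; [assumption|]; rewrite Z.pow_2_r, <- Z.abs_square, <- Z.mul_assoc.
    apply Z.mul_le_mono_nonneg_l; nia. }
  unfold dominant_key, key_range; destruct (0 <? snd a)%Z; apply in_or_app; [left|right];
    apply in_map_iff; exists (Z.to_nat (c * snd a ^ 2 / P)); (split; [lia|apply in_seq; lia]).
Qed.

Definition key_weight (j : Z) : R := / Rpower (IZR P * IZR (Z.abs j) / IZR c) (3 / 4).

Lemma weight1_le_key_weight a : In a S -> (Z.abs (fst a) <= Z.abs (snd a))%Z ->
  weight1 a <= key_weight (dominant_key a).
Proof.
  intros Ha Hd; pose proof (dominant_key_pos a Ha Hd) as HD.
  assert (Habs : Z.abs (dominant_key a) = (c * snd a ^ 2 / P)%Z)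
    by (unfold dominant_key; destruct (0 <? snd a)%Z; lia).
  assert (Hsup : supnorm (fst a) (snd a) = Z.abs (snd a)) by (unfold supnorm; lia).
  unfold weight1, key_weight; rewrite Habs, Hsup.
  assert (Hpos : 0 < IZR (Z.abs (snd a))).
  { apply IZR_lt; pose proof (separated_from_origin a Ha).
    destruct (Z.eq_dec (snd a) 0) as [E|]; [rewrite E in *; lia|lia]. }
  replace (3 / 2) with (INR 2 * (3 / 4)) by (cbn; field).
  rewrite <- Rpower_pow_l by assumption.
  pose proof (Z.mul_div_le (c * snd a ^ 2) P HP) as Hfl.
  assert (0 < IZR P) by (apply IZR_lt; lia); assert (0 < IZR c) by (apply IZR_lt; lia).
  assert (0 < IZR (c * snd a ^ 2 / P)) by (apply IZR_lt; lia).
  apply Rinv_le_contravar; [apply Rpower_pos|apply Rle_Rpower_l; [lra|split]].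
  - apply Rdiv_lt_0_compat; [apply Rmult_lt_0_compat|]; assumption.
  - apply (Rmult_le_reg_r (IZR c)); [assumption|].
    replace (IZR P * IZR (c * snd a ^ 2 / P) / IZR c * IZR c)
      with (IZR (P * (c * snd a ^ 2 / P))) by (rewrite mult_IZR; field; lra).
    replace (IZR (Z.abs (snd a)) ^ 2 * IZR c) with (IZR (c * snd a ^ 2))
      by (rewrite abs_IZR, pow2_abs, Z.pow_2_r, !mult_IZR; ring).
    apply IZR_le; assumption.
Qed.

Lemma sum_weight1_dominant_le :
  sumR (filter (fun a => Z.abs (fst a) <=? Z.abs (snd a))%Z S) weight1
  <= sumR (key_range (Z.to_nat (c * N * N / P))) key_weight.
Proof.
  apply Rle_trans with
    (sumR (filter (fun a => Z.abs (fst a) <=? Z.abs (snd a))%Z S)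
       (fun a => key_weight (dominant_key a))).
  - apply sumR_le; intros a Ha; apply filter_In in Ha as [Ha Hd]; apply Z.leb_le in Hd.
    apply weight1_le_key_weight; assumption.
  - apply sumR_le_inj.
    + apply NoDup_filter; assumption.
    + intros a b Ha Hb; apply filter_In in Ha as [Ha Hda], Hb as [Hb Hdb].
      apply Z.leb_le in Hda, Hdb; apply dominant_key_inj; assumption.
    + intros a Ha; apply filter_In in Ha as [Ha Hd]; apply Z.leb_le in Hd.
      apply dominant_key_in_range; assumption.
    + intros j _; left; apply Rinv_0_lt_compat, Rpower_pos.
Qed.

End HyperbolicSeparated.

Lemma sum_key_range_weight P c K :
  sumR (key_range K) (key_weight P c)
  = 2 * sumR (seq 1 K) (fun i => / Rpower (IZR P * INR i / IZR c) (3 / 4)).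
Proof.
  unfold key_range, key_weight; rewrite sumR_app, !sumR_map.
  rewrite (sumR_ext _ (fun x => / Rpower (IZR P * IZR (Z.abs (- Z.of_nat x)) / IZR c) (3 / 4))
             (fun x => / Rpower (IZR P * IZR (Z.abs (Z.of_nat x)) / IZR c) (3 / 4)))
    by (intros; rewrite Z.abs_opp; reflexivity).
  rewrite (sumR_ext _ (fun x => / Rpower (IZR P * IZR (Z.abs (Z.of_nat x)) / IZR c) (3 / 4))
             (fun i => / Rpower (IZR P * INR i / IZR c) (3 / 4)))
    by (intros; rewrite Z.abs_eq, <- INR_IZR_INZ by lia; reflexivity).
  ring.
Qed.

Lemma hyperbolic_separated_swap P c S :
  hyperbolic_separated P c S -> hyperbolic_separated P c (map pair_swap S).
Proof.
  intros Hs a b Ha Hb Hne; apply in_map_iff in Ha as (a' & <- & Ha), Hb as (b' & <- & Hb).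
  cbn; rewrite <- Z.mul_assoc, (Z.mul_comm (Z.abs _)), Z.mul_assoc.
  apply Hs; auto; intros ->; auto.
Qed.

Lemma weight1_swap a : weight1 (pair_swap a) = weight1 a.
Proof. unfold weight1, supnorm; cbn; rewrite Z.max_comm; reflexivity. Qed.

Lemma sum_weight1_separated_le (P c N : Z) (S : list (Z * Z)) :
  (0 < P)%Z -> (0 < c)%Z -> NoDup S -> ~ In (0, 0)%Z S ->
  hyperbolic_separated P c ((0, 0)%Z :: S) ->
  (forall a, In a S -> Z.abs (fst a) <= N /\ Z.abs (snd a) <= N)%Z ->
  sumR S weight1
  <= 4 * sumR (seq 1 (Z.to_nat (c * N * N / P)))
             (fun i => / Rpower (IZR P * INR i / IZR c) (3 / 4)).
Proof.
  intros HP Hc HS HS0 Hsep Hbox.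
  pose proof (sum_weight1_dominant_le P c N S HP Hc HS HS0 Hsep Hbox) as Hdom.
  set (dom := fun a : Z * Z => (Z.abs (fst a) <=? Z.abs (snd a))%Z).
  set (K := Z.to_nat (c * N * N / P)).
  assert (Hswap : sumR (filter (fun a => dom (pair_swap a)) S) weight1
                  = sumR (filter dom (map pair_swap S)) weight1).
  { rewrite filter_map_swap, sumR_map; apply sumR_ext; intros; rewrite weight1_swap; reflexivity. }
  assert (Hdom' : sumR (filter dom (map pair_swap S)) weight1
                  <= sumR (key_range K) (key_weight P c)).
  { apply sum_weight1_dominant_le; try assumption.
    - apply NoDup_map_NoDup_ForallPairs; [|assumption].
      intros [x1 x2] [y1 y2] _ _ E; inversion E; reflexivity.
    - intros H0; apply in_map_iff in H0 as ([x1 x2] & E & Hx); inversion E; subst; contradiction.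
    - apply (hyperbolic_separated_swap P c ((0, 0)%Z :: S)) in Hsep; exact Hsep.
    - intros a Ha; apply in_map_iff in Ha as (a' & <- & Ha'); cbn.
      specialize (Hbox a' Ha'); tauto. }
  rewrite sum_key_range_weight in Hdom, Hdom'.
  assert (Hcov : sumR S weight1 <= sumR (filter dom S) weight1
                                   + sumR (filter (fun a => dom (pair_swap a)) S) weight1).
  { apply sumR_le_filter_cover.
    - intros a _; unfold dom, pair_swap; cbn.
      destruct (Z.leb_spec (Z.abs (fst a)) (Z.abs (snd a))); [reflexivity|].
      apply Z.leb_le; lia.
    - intros a _; unfold weight1; left; apply Rinv_0_lt_compat, Rpower_pos. }
  unfold dom, K in *; lra.
Qed.

(* With [a = x^(1/4)] and [b = (x+1)^(1/4)]: [1 = b^4 - a^4 <= 4 b^3 (b - a)]. *)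
Lemma inv_Rpower_3_4_le_increment x : 0 < x ->
  / Rpower (x + 1) (3 / 4) <= 4 * (Rpower (x + 1) (1 / 4) - Rpower x (1 / 4)).
Proof.
  intros Hx.
  set (a := Rpower x (1 / 4)); set (b := Rpower (x + 1) (1 / 4)).
  assert (Ha4 : a ^ 4 = x) by (apply Rpower_pow_r_inv; [lra|cbn; field]).
  assert (Hb4 : b ^ 4 = x + 1) by (apply Rpower_pow_r_inv; [lra|cbn; field]).
  assert (Hb3 : Rpower (x + 1) (3 / 4) = b ^ 3)
    by (unfold b; rewrite Rpower_pow_r; f_equal; cbn; field).
  assert (Ha : 0 < a) by apply Rpower_pos; assert (Hb : 0 < b) by apply Rpower_pos.
  assert (Hab : a <= b) by (apply (pow_le_reg a b 4); lra || lia).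
  assert (Hfac : 1 = (b - a) * (b ^ 3 + b ^ 2 * a + b * a ^ 2 + a ^ 3)) by nra.
  assert (1 <= 4 * b ^ 3 * (b - a)).
  { rewrite Hfac; assert (b ^ 2 * a <= b ^ 3) by (cbn; nra);
      assert (b * a ^ 2 <= b ^ 3) by (cbn; nra); assert (a ^ 3 <= b ^ 3) by (cbn; nra); nra. }
  rewrite Hb3; assert (0 < b ^ 3) by (apply pow_lt; lra).
  apply (Rmult_le_reg_l (b ^ 3)); [assumption|]; rewrite Rinv_r by lra; lra.
Qed.

Lemma sum_inv_Rpower_3_4_le K :
  sumR (seq 1 K) (fun i => / Rpower (INR i) (3 / 4)) <= 4 * Rpower (INR K) (1 / 4).
Proof.
  induction K as [|K IH].
  - cbn [seq]; rewrite sumR_nil; pose proof (Rpower_pos (INR 0) (1 / 4)); lra.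
  - rewrite seq_S, sumR_app, sumR_cons, sumR_nil; replace (1 + K)%nat with (S K) by lia.
    destruct K as [|K].
    + cbn [seq INR]; rewrite sumR_nil, Rplus_0_r, !Rpower_1_l; lra.
    + rewrite (S_INR (S K)).
      pose proof (inv_Rpower_3_4_le_increment (INR (S K)) ltac:(apply lt_0_INR; lia)); lra.
Qed.

Lemma sum_key_weights_le p c z K : 0 < p -> 0 < c -> INR K <= z -> 0 < z ->
  sumR (seq 1 K) (fun i => / Rpower (p * INR i / c) (3 / 4))
  <= 4 * (/ Rpower (p / c) (3 / 4) * Rpower z (1 / 4)).
Proof.
  intros Hp Hc HK Hz.
  rewrite (sumR_ext _ _ (fun i => / Rpower (p / c) (3 / 4) * / Rpower (INR i) (3 / 4))).
  2: { intros i Hi; apply in_seq in Hi.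
       replace (p * INR i / c) with (p / c * INR i) by (field; lra).
       rewrite <- Rpower_mult_distr, Rinv_mult; [reflexivity| |apply lt_0_INR; lia].
       apply Rdiv_lt_0_compat; assumption. }
  rewrite sumR_scal.
  assert (0 < / Rpower (p / c) (3 / 4)) by apply Rinv_0_lt_compat, Rpower_pos.
  assert (sumR (seq 1 K) (fun i => / Rpower (INR i) (3 / 4)) <= 4 * Rpower z (1 / 4)).
  { destruct K as [|K].
    - cbn [seq]; rewrite sumR_nil; pose proof (Rpower_pos z (1 / 4)); lra.
    - apply (Rle_trans _ _ _ (sum_inv_Rpower_3_4_le (S K))), Rmult_le_compat_l; [lra|].
      apply Rle_Rpower_l; [lra|split; [apply lt_0_INR; lia|assumption]]. }
  nra.
Qed.

Definition dual_points (P Q : Z) (N : nat) : list (Z * Z) :=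
  filter (fun n => negb ((fst n =? 0)%Z && (snd n =? 0)%Z) && in_dual P Q n)%bool
    (list_prod (Zrange N) (Zrange N)).

Lemma QR_rank1_lattice Rr P Q : (0 < P)%nat ->
  QR Rr (rank1_lattice P Q)
  = / INR Rr + sumR (dual_points (Z.of_nat P) (Z.of_nat Q) (Rr - 1))
                   (fun n => weight1 n + weight2 n).
Proof.
  intros HP; unfold QR, dual_points; rewrite sumR_prod, <- sumR_filter; f_equal.
  apply sumR_ext; intros [n1 n2] _; cbn [fst snd].
  rewrite expsum_rank1_lattice by assumption.
  destruct ((n1 =? 0)%Z && (n2 =? 0)%Z)%bool, (in_dual _ _ _); cbn;
    unfold weight1, weight2; cbn; ring.
Qed.

Section DualPoints.
Variables (P Q : Z) (N : nat).

Lemma NoDup_dual_points : NoDup (dual_points P Q N).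
Proof. apply NoDup_filter, NoDup_list_prod; apply NoDup_Zrange. Qed.

Lemma dual_points_box n : In n (dual_points P Q N) ->
  (Z.abs (fst n) <= Z.of_nat N /\ Z.abs (snd n) <= Z.of_nat N)%Z.
Proof.
  intros Hn; apply filter_In in Hn as [Hn _]; destruct n as [n1 n2].
  apply in_prod_iff in Hn as [H1 H2]; apply In_Zrange in H1, H2; split; assumption.
Qed.

Lemma origin_notin_dual_points : ~ In (0, 0)%Z (dual_points P Q N).
Proof. intros H0; apply filter_In in H0 as [_ H0]; discriminate. Qed.

Lemma dual_points_in_dual n : In n (dual_points P Q N) -> in_dual P Q n = true.
Proof. intros Hn; apply filter_In in Hn as [_ Hn]; apply andb_prop in Hn; tauto. Qed.

End DualPoints.

Lemma dual_points_separated P Q N :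
  Z.abs (Q ^ 2 + Q * P - P ^ 2) = 1%Z -> (0 < Q <= P)%Z -> (2 * Z.of_nat N < P)%Z ->
  hyperbolic_separated P 5 ((0, 0)%Z :: dual_points P Q N).
Proof.
  intros Hcas HQ HN.
  assert (Hmem : forall a, In a ((0, 0)%Z :: dual_points P Q N) ->
            ((exists t, fst a = t * P - snd a * Q) /\
             Z.abs (fst a) <= Z.of_nat N /\ Z.abs (snd a) <= Z.of_nat N)%Z).
  { intros a [<-|Ha].
    - split; [exists 0%Z; reflexivity|cbn; lia].
    - split; [apply in_dual_spec, dual_points_in_dual with N; [lia|assumption]|].
      apply dual_points_box with P Q; assumption. }
  intros a b Ha Hb Hne.
  destruct (Hmem a Ha) as [[ta Hta] Hba], (Hmem b Hb) as [[tb Htb] Hbb].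
  apply (dual_lattice_separation P Q (ta - tb)); try assumption; try lia.
  intros E; apply Hne; destruct a, b; injection E; cbn; intros; f_equal; lia.
Qed.

Section DualPointSums.
Variables (P Q : Z) (N : nat) (r : R).
Hypotheses (Hcas : Z.abs (Q ^ 2 + Q * P - P ^ 2) = 1%Z) (HQ : (0 < Q <= P)%Z)
  (HN : (2 * Z.of_nat N < P)%Z) (Hr : INR N <= r).

Let S := dual_points P Q N.

Let Hsep : hyperbolic_separated P 5 ((0, 0)%Z :: S).
Proof. apply dual_points_separated; assumption. Qed.

Local Ltac separated_hyps :=
  first [ lia | apply NoDup_dual_points | apply origin_notin_dual_points | exact Hsep
        | apply dual_points_box ].

Lemma IZR_box_div_le c : (0 < c)%Z ->
  IZR (c * Z.of_nat N * Z.of_nat N / P) <= IZR c * r ^ 2 / IZR P.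
Proof.
  intros Hc; apply (Rle_trans _ _ _ (IZR_div_le _ P ltac:(lia))).
  assert (0 < IZR P) by (apply IZR_lt; lia); assert (0 < IZR c) by (apply IZR_lt; lia).
  unfold Rdiv; apply Rmult_le_compat_r; [left; apply Rinv_0_lt_compat; lra|].
  rewrite !mult_IZR, <- INR_IZR_INZ, Rmult_assoc; pose proof (pos_INR N).
  apply Rmult_le_compat_l; [lra|nra].
Qed.

Lemma sum_weight1_dual_points_le : 0 < r ->
  sumR S weight1
  <= 16 * (/ Rpower (IZR P / 5) (3 / 4) * Rpower (5 * r ^ 2 / IZR P) (1 / 4)).
Proof.
  intros Hr0; assert (0 < IZR P) by (apply IZR_lt; lia).
  eapply Rle_trans.
  { apply (sum_weight1_separated_le P 5 (Z.of_nat N)); separated_hyps. }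
  replace 16 with (4 * 4) by ring; rewrite Rmult_assoc; apply Rmult_le_compat_l; [lra|].
  apply sum_key_weights_le; [assumption|lra| |apply Rdiv_lt_0_compat; nra].
  rewrite INR_IZR_INZ, Z2Nat.id by (apply Z.div_pos; lia).
  apply IZR_box_div_le; lia.
Qed.

Lemma sum_weight2_dual_points_le : sumR S weight2 <= (4 * 5 * r ^ 2 / IZR P + 3) * (5 / IZR P).
Proof.
  assert (0 < IZR P) by (apply IZR_lt; lia).
  apply Rle_trans with (sumR S (fun _ => 5 / IZR P)).
  { apply sumR_le; intros a Ha; apply (weight2_le P 5 S); separated_hyps || assumption. }
  rewrite sumR_const; apply Rmult_le_compat_r; [apply Rlt_le, Rdiv_lt_0_compat; lra|].
  assert (Hlen : (Z.of_nat (length S) <= 2 * (2 * 5 * Z.of_nat N * Z.of_nat N / P) + 3)%Z)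
    by (apply length_separated_le; separated_hyps).
  apply IZR_le in Hlen; rewrite <- INR_IZR_INZ, plus_IZR, mult_IZR in Hlen.
  pose proof (IZR_box_div_le (2 * 5) ltac:(lia)) as Hbox; rewrite mult_IZR in Hbox; lra.
Qed.

End DualPointSums.

(* With [u = p^(1/3)], [r <= 3 u^2] and [u^2 <= 3 r]; the three terms are then at most
   [3], [32 c] and [36 c^2 + 3 c] times [u^(-2)]. *)
Lemma estimate_terms_le p r u c X L :
  1 <= r -> 1 <= p -> 0 < u -> u ^ 3 = p -> 0 < c ->
  r ^ 3 <= 9 * p ^ 2 -> p ^ 2 <= 9 * r ^ 3 ->
  0 <= X -> X ^ 4 <= c ^ 4 * r ^ 2 / p ^ 4 -> L <= 4 * c * r ^ 2 / p + 3 ->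
  / r + 16 * X + L * (c / p) <= (3 + 35 * c + 36 * c ^ 2) / u ^ 2.
Proof.
  intros Hr Hp Hu Hup Hc Hr3 Hp2 HX HX4 HL; subst p.
  assert (Hu1 : 1 <= u) by (apply (pow_le_reg 1 u 3); [lia|lra|lra|rewrite pow1; lra]).
  assert (Hru : r <= 3 * u ^ 2).
  { apply (pow_le_reg r (3 * u ^ 2) 3); [lia|lra|nra|].
    replace ((3 * u ^ 2) ^ 3) with (27 * (u ^ 3) ^ 2) by ring; nra. }
  assert (Hur : u ^ 2 <= 3 * r).
  { apply (pow_le_reg (u ^ 2) (3 * r) 3); [lia|nra|lra|].
    replace ((u ^ 2) ^ 3) with ((u ^ 3) ^ 2) by ring.
    replace ((3 * r) ^ 3) with (27 * r ^ 3) by ring; pose proof (pow_lt r 3 ltac:(lra)); lra. }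
  assert (Hu2 : 0 < u ^ 2) by (apply pow_lt; lra).
  assert (Hr2 : r ^ 2 / u ^ 4 <= 9).
  { apply (Rmult_le_reg_r (u ^ 4)); [apply pow_lt; lra|].
    replace (r ^ 2 / u ^ 4 * u ^ 4) with (r ^ 2) by (field; lra); nra. }
  assert (T1 : / r * u ^ 2 <= 3) by
    (apply (Rmult_le_reg_l r); [lra|]; rewrite <- Rmult_assoc, Rinv_r; lra).
  assert (T2 : X * u ^ 2 <= 2 * c).
  { apply (pow_le_reg _ _ 4); [lia|nra|lra|].
    replace ((X * u ^ 2) ^ 4) with (X ^ 4 * u ^ 8) by ring.
    apply Rle_trans with (c ^ 4 * r ^ 2 / (u ^ 3) ^ 4 * u ^ 8).
    { apply Rmult_le_compat_r; [apply pow_le|]; lra. }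
    replace (c ^ 4 * r ^ 2 / (u ^ 3) ^ 4 * u ^ 8) with (c ^ 4 * (r ^ 2 / u ^ 4)) by (field; lra).
    assert (0 < c ^ 4) by (apply pow_lt; lra); nra. }
  assert (T3 : L * (c / u ^ 3) * u ^ 2 <= 36 * c ^ 2 + 3 * c).
  { replace (L * (c / u ^ 3) * u ^ 2) with (L * c / u) by (field; lra).
    apply Rle_trans with ((4 * c * r ^ 2 / u ^ 3 + 3) * c / u).
    { unfold Rdiv; apply Rmult_le_compat_r; [left; apply Rinv_0_lt_compat; lra|].
      apply Rmult_le_compat_r; lra. }
    replace ((4 * c * r ^ 2 / u ^ 3 + 3) * c / u) with (4 * c ^ 2 * (r ^ 2 / u ^ 4) + 3 * c / u)
      by (field; lra).
    assert (3 * c / u <= 3 * c).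
    { apply (Rmult_le_reg_r u); [lra|]; replace (3 * c / u * u) with (3 * c) by (field; lra); nra. }
    nra. }
  apply (Rmult_le_reg_r (u ^ 2)); [assumption|].
  replace ((3 + 35 * c + 36 * c ^ 2) / u ^ 2 * u ^ 2) with (3 + 35 * c + 36 * c ^ 2)
    by (field; lra).
  lra.
Qed.

Lemma key_bound_pow4 p r : 0 < p -> 0 < r ->
  (/ Rpower (p / 5) (3 / 4) * Rpower (5 * r ^ 2 / p) (1 / 4)) ^ 4 = 5 ^ 4 * r ^ 2 / p ^ 4.
Proof.
  intros Hp Hr; rewrite Rpow_mult_distr, pow_inv, !Rpower_pow_r.
  replace (3 / 4 * INR 4) with (INR 3) by (cbn; field).
  replace (1 / 4 * INR 4) with 1 by (cbn; field).
  rewrite Rpower_pow, Rpower_1 by (apply Rdiv_lt_0_compat; nra).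
  field; lra.
Qed.

Lemma Rpower_neg_two_thirds p : 0 < p -> Rpower p (- (2 / 3)) = / Rpower p (1 / 3) ^ 2.
Proof. intros Hp; rewrite Rpower_Ropp, Rpower_pow_r; f_equal; f_equal; cbn; field. Qed.

Lemma Rpower_one_third_cube p : 0 < p -> Rpower p (1 / 3) ^ 3 = p.
Proof. intros Hp; apply Rpower_pow_r_inv; [assumption|cbn; field]. Qed.

Lemma QR_rank1_lattice_le (Pn Qn Rn : nat) :
  Z.abs (Z.of_nat Qn ^ 2 + Z.of_nat Qn * Z.of_nat Pn - Z.of_nat Pn ^ 2) = 1%Z ->
  (0 < Qn <= Pn)%nat -> (1 <= Rn)%nat -> (2 * (Rn - 1) < Pn)%nat ->
  (Rn ^ 3 <= 9 * Pn ^ 2)%nat -> (Pn ^ 2 <= 9 * Rn ^ 3)%nat ->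
  QR Rn (rank1_lattice Pn Qn) <= 1078 * Rpower (INR Pn) (- (2 / 3)).
Proof.
  intros Hcas HQ HR HRP HR3 HP2.
  assert (Hp : 1 <= INR Pn) by (apply (le_INR 1); lia).
  assert (Hr : 1 <= INR Rn) by (apply (le_INR 1); lia).
  assert (HN : INR (Rn - 1) <= INR Rn) by (apply le_INR; lia).
  assert (HPZ : IZR (Z.of_nat Pn) = INR Pn) by (rewrite <- INR_IZR_INZ; reflexivity).
  pose proof (sum_weight1_dual_points_le (Z.of_nat Pn) (Z.of_nat Qn) (Rn - 1) (INR Rn)
                Hcas ltac:(lia) ltac:(lia) HN ltac:(lra)) as Hw1.
  pose proof (sum_weight2_dual_points_le (Z.of_nat Pn) (Z.of_nat Qn) (Rn - 1) (INR Rn)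
                Hcas ltac:(lia) ltac:(lia) HN) as Hw2.
  rewrite HPZ in Hw1, Hw2.
  set (X := / Rpower (INR Pn / 5) (3 / 4) * Rpower (5 * INR Rn ^ 2 / INR Pn) (1 / 4)) in Hw1.
  rewrite QR_rank1_lattice, sumR_plus, Rpower_neg_two_thirds by (lia || lra).
  apply Rle_trans with (/ INR Rn + 16 * X + (4 * 5 * INR Rn ^ 2 / INR Pn + 3) * (5 / INR Pn));
    [lra|].
  replace (1078 * / Rpower (INR Pn) (1 / 3) ^ 2)
    with ((3 + 35 * 5 + 36 * 5 ^ 2) / Rpower (INR Pn) (1 / 3) ^ 2) by (unfold Rdiv; ring).
  apply estimate_terms_le; try lra.
  - apply Rpower_pos.
  - apply Rpower_one_third_cube; lra.
  - apply le_INR in HR3; rewrite mult_INR, !pow_INR in HR3.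
    replace (INR 9) with 9 in HR3 by (cbn; ring); exact HR3.
  - apply le_INR in HP2; rewrite mult_INR, !pow_INR in HP2.
    replace (INR 9) with 9 in HP2 by (cbn; ring); exact HP2.
  - apply Rmult_le_pos; left; [apply Rinv_0_lt_compat|]; apply Rpower_pos.
  - unfold X; rewrite key_bound_pow4; lra.
Qed.

Theorem lemma1 :
  exists c : R, 0 < c /\
    forall k : nat, (3 <= k)%nat ->
      QR (fib (ceil_2k3 k)) (fib_lattice k)
        <= c * Rpower (INR (fib k)) (- (2 / 3)).
Proof.
  exists 1078; split; [lra|]; intros k Hk.
  pose proof (ceil_2k3_spec k) as Hm.
  (* [fib_lattice k] is [rank1_lattice (fib k) (fib (k - 1))] by definition. *)
  apply (QR_rank1_lattice_le (fib k) (fib (k - 1))).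
  - apply fib_cassini; lia.
  - split; [apply fib_pos; lia|apply fib_mono; lia].
  - apply fib_pos; lia.
  - apply fib_ceil_2k3_lt; assumption.
  - apply fib_cube_le; lia.
  - apply fib_sq_le; lia.
Qed.
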